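(* Let $(\Omega,\mathbb B(\Omega),\mu,T)$ be a measure-preserving dynamical system and let $\mathbf X=(X_1,\dots,X_N)$ be an $\mathbb R^N$-valued random vector on $(\Omega,\mathbb B(\Omega))$ satisfying condition (OR), i.e. $h_\mu(T)=\lim_{d\to\infty}h_\mu(T,\mathcal P^{\mathbf X}(d))$. Then: (i) $h_\mu(T)\le \limsup_{d\to\infty}h^{\mathbf X}_{\mu,\mathrm{cond}}(T,d)\le \limsup_{d\to\infty}h^{\mathbf X}_{\mu,\triangle}(T,d)$. (ii) If moreover either there is $d_0\in\mathbb N$ with $h^{\mathbf X}_\mu(T,d)\ge h^{\mathbf X}_\mu(T,d+1)$ for all $d\ge d_0$, or the limit $\lim_{d\to\infty}h^{\mathbf X}_{\mu,\triangle}(T,d)$ exists, then $$h_\mu(T)\le \limsup_{d\to\infty}h^{\mathbf X}_{\mu,\mathrm{cond}}(T,d)\le \limsup_{d\to\infty}h^{\mathbf X}_{\mu,\triangle}(T,d)\le \limsup_{d\to\infty}h^{\mathbf X}_{\mu}(T,d).$$ Both statements remain true with all upper limits replaced by lower limits.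
   Context: A measure-preserving dynamical system $(\Omega,\mathbb B(\Omega),\mu,T)$ consists of a nonempty topological space $\Omega$ with Borel $\sigma$-algebra $\mathbb B(\Omega)$, a probability measure $\mu$, and a measurable map $T:\Omega\to\Omega$ with $\mu(T^{-1}B)=\mu(B)$ for all $B\in\mathbb B(\Omega)$. For a finite partition $\mathcal P=\{P_0,\dots,P_l\}\subset\mathbb B(\Omega)$ of $\Omega$: $H(\mathcal P)=-\sum_{P\in\mathcal P}\mu(P)\ln\mu(P)$ (with $0\ln0=0$); $\mathcal P_n$ is the partition consisting of the sets $P_{a_0}\cap T^{-1}(P_{a_1})\cap\dots\cap T^{-(n-1)}(P_{a_{n-1}})$, $a_i\in\{0,\dots,l\}$; $h_\mu(T,\mathcal P)=\lim_{n\to\infty}(H(\mathcal P_{n+1})-H(\mathcal P_n))$; the Kolmogorov–Sinai entropy is $h_\mu(T)=\sup_{\mathcal P}h_\mu(T,\mathcal P)$ over finite partitions. Let $\Pi_d$ be the set of permutations of $\{0,1,\dots,d\}$. A vector $(x_0,\dots,x_d)\in\mathbb R^{d+1}$ has ordinal pattern $\pi=(r_0,\dots,r_d)\in\Pi_d$ if $x_{r_0}\ge x_{r_1}\ge\dots\ge x_{r_d}$ and $r_{l-1}>r_l$ whenever $x_{r_{l-1}}=x_{r_l}$. For a random vector $\mathbf X=(X_1,\dots,X_N)$ and $d\in\mathbb N$, the ordinal partition $\mathcal P^{\mathbf X}(d)$ consists of the sets $P_{(\pi_1,\dots,\pi_N)}=\{\omega: (X_i(T^{d}\omega),X_i(T^{d-1}\omega),\dots,X_i(T\omega),X_i(\omega))\text{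 has ordinal pattern }\pi_i\text{ for } i=1,\dots,N\}$, $\pi_i\in\Pi_d$. Permutation entropy: $h^{\mathbf X}_\mu(T,d)=\frac1d H(\mathcal P^{\mathbf X}(d))$. Sorting entropy: $h^{\mathbf X}_{\mu,\triangle}(T,d)=H(\mathcal P^{\mathbf X}(d+1))-H(\mathcal P^{\mathbf X}(d))$. Conditional entropy of ordinal patterns: $h^{\mathbf X}_{\mu,\mathrm{cond}}(T,d)=H(\mathcal P^{\mathbf X}(d)_2)-H(\mathcal P^{\mathbf X}(d))$. *)

From HB Require Import structures.
From mathcomp Require Import all_boot all_order all_algebra all_fingroup.
From mathcomp Require Import all_classical all_reals all_analysis.
Unset Printing Implicit Defensive.
Import Order.TTheory GRing.Theory Num.Theory.
Local Open Scope classical_set_scope.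
Local Open Scope ring_scope.

Definition borel_space (Om : ptopologicalType) := g_sigma_algebraType (@open Om).

Section Entropy.
Context {Om : ptopologicalType} {R : realType}.
Local Notation B := (borel_space Om).
Context (mu : probability B R) (T : B -> B).

Definition measure_preserving :=
  measurable_fun setT T /\
  forall A : set B, measurable A -> mu (T @^-1` A) = mu A.

Definition is_partition {I : finType} (P : I -> set B) :=
  (forall i, measurable (P i)) /\
  (forall i j, i != j -> P i `&` P j = set0) /\
  (\bigcup_(i in [set: I]) P i = [set: B]).

(* H(P) = - sum_P mu(P) ln mu(P)  (with 0 ln 0 = 0, since ln 0 = 0 here) *)
Definition entropy {I : finType} (P : I -> set B) : R :=
  - \sum_(i : I) fine (mu (P i)) * ln (fine (mu (P i))).

Definition refine_n {I : finType} (P : I -> set B) (n : nat)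
  : {ffun 'I_n -> I} -> set B :=
  fun a => [set w | forall k : 'I_n, P (a k) (iter k T w)].

Definition ks_entropy_part {I : finType} (P : I -> set B) : R :=
  lim ((fun n => entropy (refine_n P n.+1) - entropy (refine_n P n)) @ \oo).

Definition ks_entropy : \bar R :=
  ereal_sup [set (ks_entropy_part (projT2 P))%:E |
     P in [set P : {l : nat & 'I_l.+1 -> set B} | is_partition (projT2 P)]
     ] .

(* The vector (x_0,...,x_d) has ordinal pattern pi = (r_0,...,r_d),
   where r_l = pi l. *)
Definition has_ordinal_pattern {d : nat} (x : 'I_d.+1 -> R)
  (pi : {perm 'I_d.+1}) : Prop :=
  forall l1 l2 : 'I_d.+1, nat_of_ord l2 = (nat_of_ord l1).+1 ->
    x (pi l2) <= x (pi l1) /\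
    (x (pi l1) = x (pi l2) -> (nat_of_ord (pi l2) < nat_of_ord (pi l1))%N).

Definition delay_vector {N : nat} (X : 'I_N -> B -> R) (i : 'I_N) (d : nat)
  (w : B) : 'I_d.+1 -> R :=
  fun j => X i (iter (d - nat_of_ord j) T w).

Definition ordinal_partition {N : nat} (X : 'I_N -> B -> R) (d : nat)
  : {ffun 'I_N -> {perm 'I_d.+1}} -> set B :=
  fun pis => [set w | forall i : 'I_N,
                 has_ordinal_pattern (delay_vector X i d w) (pis i)].

Definition perm_entropy {N} (X : 'I_N -> B -> R) (d : nat) : R :=
  entropy (ordinal_partition X d) / d%:R.

Definition sorting_entropy {N} (X : 'I_N -> B -> R) (d : nat) : R :=
  entropy (ordinal_partition X d.+1) - entropy (ordinal_partition X d).

Definition cond_entropy {N} (X : 'I_N -> B -> R) (d : nat) : R :=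
  entropy (refine_n (ordinal_partition X d) 2) - entropy (ordinal_partition X d).

End Entropy.

From HB Require Import structures.
From mathcomp Require Import all_boot all_order all_algebra all_fingroup.
From mathcomp Require Import all_classical all_reals all_analysis.
From mathcomp Require Import ring lra zify measurable_realfun.
Import Order.TTheory GRing.Theory Num.Theory.
Import numFieldNormedType.Exports.
Local Open Scope classical_set_scope.
Local Open Scope ring_scope.

(* For a partition P, submodularity of entropy and the T-invariance of mu make
   the increments H(P_(n+1)) - H(P_n) nonincreasing, so h_mu(T, P) is at most the
   first increment H(P_2) - H(P).  Applied to P = P^X(d) this bounds
   h_mu(T, P^X(d)) by the conditional entropy of ordinal patterns, which in turn
   is at most the sorting entropy because P^X(d+1) refines P^X(d)_2: a pattern of
   order d+1 determines the patterns of its two sub-windows of order d.  Under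
   (OR) this gives (i) for upper and lower limits alike.  For (ii), a
   nonincreasing permutation entropy H(P^X(d))/d forces the increments below the
   means, and convergent increments force the means to the same limit (Cesaro). *)

Section XLnX.
Context {R : realType}.

Definition xlnx (x : R) := x * ln x.

Lemma xlnx_sum_le (J : finType) (P : pred J) (f : J -> R) :
  (forall j, 0 <= f j) -> \sum_(j | P j) xlnx (f j) <= xlnx (\sum_(j | P j) f j).
Proof.
move=> f_ge0; rewrite {2}/xlnx mulr_suml; apply: ler_sum => j Pj.
have [->|fj_neq0] := eqVneq (f j) 0; first by rewrite /xlnx !mul0r.
have fj_gt0 : 0 < f j by rewrite lt_def fj_neq0 f_ge0.
apply: ler_wpM2l => //; rewrite ler_ln ?posrE//.
  by rewrite (bigD1 j)//= lerDl sumr_ge0.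
by rewrite (lt_le_trans fj_gt0)// (bigD1 j)//= lerDl sumr_ge0.
Qed.

Lemma ln_le_subr1 (x : R) : 0 < x -> ln x <= x - 1.
Proof.
move=> x_gt0; have := @le_ln1Dx R (x - 1); rewrite addrCA subrr addr0; apply.
by rewrite ltrBrDl subrr.
Qed.

Lemma mul_ln_ratio_le (q r c S : R) : 0 <= q -> q <= r -> q <= c -> r <= S ->
  q * (ln r + ln c - ln q - ln S) <= r * c / S - q.
Proof.
move=> q_ge0 qr qc rS; have [->|q_neq0] := eqVneq q 0.
  by rewrite mul0r subr0 divr_ge0 ?mulr_ge0// (le_trans q_ge0)// (le_trans qr).
have q_gt0 : 0 < q by rewrite lt_def q_neq0 q_ge0.
have r_gt0 := lt_le_trans q_gt0 qr; have c_gt0 := lt_le_trans q_gt0 qc.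
have S_gt0 := lt_le_trans r_gt0 rS.
have ratio_gt0 : 0 < r * c / (q * S) by rewrite !(mulr_gt0, invr_gt0).
have -> : ln r + ln c - ln q - ln S = ln (r * c / (q * S)).
  rewrite (lnM (x := r * c)) ?posrE ?invr_gt0 ?mulr_gt0//.
  rewrite (lnM (x := r)) ?posrE// lnV ?posrE ?mulr_gt0//.
  by rewrite (lnM (x := q)) ?posrE// opprD addrA.
apply: (le_trans (ler_wpM2l (ltW q_gt0) (ln_le_subr1 _ ratio_gt0))).
rewrite mulrBr mulr1 lerD2r [X in X <= _](_ : _ = r * c / S) //.
by field; rewrite ?mulf_neq0 ?gt_eqF.
Qed.

(* Submodularity of entropy, in the unnormalized form of a nonnegative table. *)
Lemma xlnx_submodular (A B : finType) (q : A -> B -> R) :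
  (forall a b, 0 <= q a b) ->
  \sum_a xlnx (\sum_b q a b) + \sum_b xlnx (\sum_a q a b) <=
  \sum_a \sum_b xlnx (q a b) + xlnx (\sum_a \sum_b q a b).
Proof.
move=> q_ge0; set r := fun a => \sum_b q a b; set c := fun b => \sum_a q a b.
set S := \sum_a r a.
have sum_c : \sum_b c b = S by rewrite /c exchange_big.
have le_sum (J : finType) (f : J -> R) j : (forall j, 0 <= f j) -> f j <= \sum_j f j.
  by move=> f_ge0; rewrite (bigD1 j)//= lerDl sumr_ge0.
have weighted_le0 : \sum_a \sum_b q a b * (ln (r a) + ln (c b) - ln (q a b) - ln S) <= 0.
  apply: le_trans (_ : \sum_a \sum_b (r a * c b / S - q a b) <= 0).
    apply: ler_sum => a _; apply: ler_sum => b _; apply: mul_ln_ratio_le => //.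
    - exact: le_sum.
    - exact: (le_sum _ (fun a => q a b)).
    - by apply: le_sum => a'; exact: sumr_ge0.
  under eq_bigr do rewrite sumrB -mulr_suml -mulr_sumr sum_c.
  rewrite sumrB -!mulr_suml -/S.
  by have [->|S_neq0] := eqVneq S 0; rewrite ?mulr0 ?mul0r ?mulfK// subrr.
have expand : \sum_a \sum_b q a b * (ln (r a) + ln (c b) - ln (q a b) - ln S) =
    \sum_a xlnx (r a) + \sum_b xlnx (c b) - \sum_a \sum_b xlnx (q a b) - xlnx S.
  have e1 : \sum_a \sum_b q a b * ln (r a) = \sum_a xlnx (r a).
    by apply: eq_bigr => a _; rewrite /xlnx /r mulr_suml.
  have e2 : \sum_a \sum_b q a b * ln (c b) = \sum_b xlnx (c b).
    by rewrite exchange_big; apply: eq_bigr => b _; rewrite /xlnx /c mulr_suml.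
  have e3 : \sum_a \sum_b q a b * ln S = xlnx S.
    by rewrite /xlnx /S mulr_suml; apply: eq_bigr => a _; rewrite mulr_suml.
  rewrite -e1 -e2 -e3 /xlnx -big_split -!sumrB; apply: eq_bigr => a _.
  rewrite -big_split -!sumrB; apply: eq_bigr => b _.
  by rewrite !mulrDr !mulrN.
by move: weighted_le0; rewrite expand /r /c /S; lra.
Qed.

End XLnX.

Section FinfunConsRcons.
Context {I : finType}.

Definition ffcons {n} (a : I) (h : {ffun 'I_n -> I}) : {ffun 'I_n.+1 -> I} :=
  [ffun k => if unlift ord0 k is Some k' then h k' else a].
Definition ffbehead {n} (h : {ffun 'I_n.+1 -> I}) : {ffun 'I_n -> I} :=
  [ffun k => h (lift ord0 k)].
Definition ffrcons {n} (h : {ffun 'I_n -> I}) (b : I) : {ffun 'I_n.+1 -> I} :=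
  [ffun k => if unlift ord_max k is Some k' then h k' else b].
Definition ffbelast {n} (h : {ffun 'I_n.+1 -> I}) : {ffun 'I_n -> I} :=
  [ffun k => h (lift ord_max k)].

Lemma ffcons0 n a (h : {ffun 'I_n -> I}) : ffcons a h ord0 = a.
Proof. by rewrite ffunE unlift_none. Qed.

Lemma ffconsS n a (h : {ffun 'I_n -> I}) k : ffcons a h (lift ord0 k) = h k.
Proof. by rewrite ffunE liftK. Qed.

Lemma ffrcons_max n b (h : {ffun 'I_n -> I}) : ffrcons h b ord_max = b.
Proof. by rewrite ffunE unlift_none. Qed.

Lemma ffrconsS n b (h : {ffun 'I_n -> I}) k : ffrcons h b (lift ord_max k) = h k.
Proof. by rewrite ffunE liftK. Qed.

Lemma ffcons_behead n (h : {ffun 'I_n.+1 -> I}) : ffcons (h ord0) (ffbehead h) = h.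
Proof.
apply/ffunP => k; case: (unliftP ord0 k) => [k'|] ->; last by rewrite ffcons0.
by rewrite ffconsS ffunE.
Qed.

Lemma ffrcons_belast n (h : {ffun 'I_n.+1 -> I}) :
  ffrcons (ffbelast h) (h ord_max) = h.
Proof.
apply/ffunP => k; case: (unliftP ord_max k) => [k'|] ->; last by rewrite ffrcons_max.
by rewrite ffrconsS ffunE.
Qed.

Context {R : Type} {idx : R} (op : Monoid.com_law idx).

Lemma big_ffcons n (F : {ffun 'I_n.+1 -> I} -> R) :
  \big[op/idx]_h F h = \big[op/idx]_a \big[op/idx]_h F (ffcons a h).
Proof.
rewrite pair_big (reindex (fun p : I * {ffun 'I_n -> I} => ffcons p.1 p.2)) //=.
exists (fun h : {ffun 'I_n.+1 -> I} => (h ord0, ffbehead h)) => [[a h] _|h _].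
  by congr pair; [exact: ffcons0|apply/ffunP => k; rewrite ffunE ffconsS].
exact: ffcons_behead.
Qed.

Lemma big_ffrcons n (F : {ffun 'I_n.+1 -> I} -> R) :
  \big[op/idx]_h F h = \big[op/idx]_h \big[op/idx]_b F (ffrcons h b).
Proof.
rewrite pair_big (reindex (fun p : {ffun 'I_n -> I} * I => ffrcons p.1 p.2)) //=.
exists (fun h : {ffun 'I_n.+1 -> I} => (ffbelast h, h ord_max)) => [[h b] _|h _].
  by congr pair; [apply/ffunP => k; rewrite ffunE ffrconsS|exact: ffrcons_max].
exact: ffrcons_belast.
Qed.

Lemma big_ffun1 (F : {ffun 'I_1 -> I} -> R) :
  \big[op/idx]_h F h = \big[op/idx]_a F [ffun => a].
Proof.
rewrite (reindex (fun a : I => [ffun => a])) //=.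
exists (fun h : {ffun 'I_1 -> I} => h ord0) => [a _|h _]; first by rewrite ffunE.
by apply/ffunP => k; rewrite ffunE (ord1 k).
Qed.

End FinfunConsRcons.

Section Partitions.
Context {Om : ptopologicalType}.
Local Notation B := (borel_space Om).

Lemma disjoint_family_eq {J : eqType} {D : J -> set B} {i j : J} {x : B} :
  (forall i j, i != j -> D i `&` D j = set0) -> D i x -> D j x -> i = j.
Proof.
move=> dD Dix Djx; apply/eqP; apply: contraT => /dD /seteqP[+ _].
by move=> /(_ x (conj Dix Djx)).
Qed.

Lemma is_partition_cover {J : finType} {D : J -> set B} :
  is_partition D -> forall x, exists j, D j x.
Proof.
move=> [_ [_ cD]] x; have : (\bigcup_(j in [set: J]) D j) x by rewrite cD.
by move=> [j _ Djx]; exists j.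
Qed.

Lemma measurable_forall (J : finType) (D : J -> set B) :
  (forall j, measurable (D j)) -> measurable [set x | forall j, D j x].
Proof.
move=> mD; have -> : [set x | forall j, D j x] = \bigcap_(j in [set: J]) D j.
  by apply/seteqP; split => x /= Dx j; [move=> _|]; exact: Dx.
exact: fin_bigcap_measurable finite_finset _.
Qed.

End Partitions.

Section ProbabilityEntropy.
Context {Om : ptopologicalType} {R : realType}.
Local Notation B := (borel_space Om).
Context (mu : probability B R).

Definition pr (A : set B) : R := fine (mu A).

Lemma pr_ge0 A : 0 <= pr A.
Proof. by rewrite fine_ge0. Qed.

Lemma pr_partition (J : finType) (C : set B) (D : J -> set B) :
  (forall j, measurable (D j)) -> (forall i j, i != j -> D i `&` D j = set0) ->
  (forall x, C x <-> exists j, D j x) -> pr C = \sum_j pr (D j).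
Proof.
move=> mD dD CD; have -> : C = \bigcup_(j in [set` enum J]) D j.
  apply/seteqP; split => x; last by move=> [j _ Djx]; apply/CD; exists j.
  by move/CD => [j Djx]; exists j; rewrite //= mem_enum.
rewrite /pr measure_fin_bigcup ?finite_seq//; last first.
  by apply/trivIsetP => i j _ _; exact: dD.
rewrite -fsbig_seq ?enum_uniq// big_enum /= sum_fine// => j _.
by rewrite fin_num_measure.
Qed.

Lemma entropyE (J : finType) (D : J -> set B) :
  entropy mu D = - \sum_j xlnx (pr (D j)).
Proof. by []. Qed.

Lemma entropy_le_of_refinement (J K : finType) (P : J -> set B) (Q : K -> set B) :
  (forall i j, i != j -> P i `&` P j = set0) ->
  is_partition Q -> (forall k, exists j, Q k `<=` P j) ->
  entropy mu P <= entropy mu Q.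
Proof.
move=> dP Qpart /choice[f QP]; have [mQ [dQ _]] := Qpart.
have prP j : pr (P j) = \sum_(k | f k == j) pr (Q k).
  rewrite big_mkcond /= (@pr_partition _ _ (fun k => if f k == j then Q k else set0)).
  - by apply: eq_bigr => k _; case: ifP; rewrite // /pr measure0.
  - by move=> k; case: ifP => // _; exact: mQ.
  - move=> k k' kk'; case: ifP => _; last by rewrite set0I.
    by case: ifP => _; [exact: dQ|rewrite setI0].
  - move=> x; split => [Pjx|[k]]; last by case: ifP => // /eqP <- /QP.
    have [k Qkx] := is_partition_cover Qpart x; exists k.
    by rewrite (disjoint_family_eq dP (QP k x Qkx) Pjx) eqxx.
rewrite !entropyE lerN2 (partition_big f xpredT)//=.
by apply: ler_sum => j _; rewrite prP; apply: xlnx_sum_le => k; exact: pr_ge0.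
Qed.

End ProbabilityEntropy.

Section IteratedRefinement.
Context {Om : ptopologicalType} {R : realType}.
Local Notation B := (borel_space Om).
Context (mu : probability B R) (T : B -> B).
Context {I : finType} (P : I -> set B).
Hypothesis dP : forall i j, i != j -> P i `&` P j = set0.

Local Notation rf := (refine_n T P).

Lemma refine_n_ffcons n a (h : {ffun 'I_n -> I}) :
  rf n.+1 (ffcons a h) = P a `&` T @^-1` rf n h.
Proof.
apply/seteqP; split => w /=.
  move=> Hw; split; first by have := Hw ord0; rewrite ffcons0.
  by move=> k; have := Hw (lift ord0 k); rewrite ffconsS lift0 iterSr.
move=> [Paw Hw] k; case: (unliftP ord0 k) => [k'|] ->; last by rewrite ffcons0.
by rewrite ffconsS lift0 iterSr; apply: Hw.
Qed.

Lemma refine_n_ffrcons n b (h : {ffun 'I_n -> I}) :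
  rf n.+1 (ffrcons h b) = rf n h `&` iter n T @^-1` P b.
Proof.
apply/seteqP; split => w /=.
  move=> Hw; split; last by have := Hw ord_max; rewrite ffrcons_max.
  by move=> k; have := Hw (lift ord_max k); rewrite ffrconsS lift_max.
move=> [Hw Pbw] k; case: (unliftP ord_max k) => [k'|] ->; last by rewrite ffrcons_max.
by rewrite ffrconsS lift_max; apply: Hw.
Qed.

Lemma refine_n_ffcons_rcons n a (h : {ffun 'I_n -> I}) b :
  rf n.+2 (ffcons a (ffrcons h b)) = rf n.+1 (ffcons a h) `&` iter n.+1 T @^-1` P b.
Proof.
rewrite !refine_n_ffcons refine_n_ffrcons.
by apply/seteqP; split => w /=; rewrite -iterSr iterS; tauto.
Qed.

Lemma refine_n_disj n (h h' : {ffun 'I_n -> I}) :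
  h != h' -> rf n h `&` rf n h' = set0.
Proof.
move=> hh'; apply/seteqP; split => // w [Hw Hw'] /=.
have [k hk] : exists k, h k != h' k.
  apply/existsP; apply: contraNT hh' => /existsPn hh'.
  by apply/eqP/ffunP => k; apply/eqP; have := hh' k; rewrite negbK.
by have /seteqP[+ _] := dP _ _ hk; apply; split; [exact: Hw|exact: Hw'].
Qed.

Hypothesis mpT : measure_preserving mu T.
Hypothesis Ppart : is_partition P.

Lemma measurable_iter n : measurable_fun setT (iter n T).
Proof.
elim: n => [|n IHn]; first exact: measurable_id.
by rewrite (_ : iter n.+1 T = T \o iter n T); [exact: measurableT_comp mpT.1 IHn|].
Qed.

Lemma measurable_refine_n n (h : {ffun 'I_n -> I}) : measurable (rf n h).
Proof.
elim: n h => [|n IHn] h.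
  by rewrite (_ : rf 0 h = setT); [|apply/seteqP; split => // w _ []].
rewrite -[h]ffcons_behead refine_n_ffcons; apply: measurableI; first exact: Ppart.1.
by rewrite -[_ @^-1` _]setTI; apply: mpT.1.
Qed.

Lemma pr_refine_n_ffrcons n (h : {ffun 'I_n -> I}) :
  pr mu (rf n h) = \sum_b pr mu (rf n.+1 (ffrcons h b)).
Proof.
apply: pr_partition => [b|b b' bb'|w]; first exact: measurable_refine_n.
  by rewrite !refine_n_ffrcons setIACA -preimage_setI (dP _ _ bb') preimage_set0 setI0.
split; last by move=> [b]; rewrite refine_n_ffrcons => -[].
by have [b Pb] := is_partition_cover Ppart (iter n T w); exists b; rewrite refine_n_ffrcons.
Qed.

(* This is where the invariance of mu under T enters. *)
Lemma pr_refine_n_ffcons n (h : {ffun 'I_n -> I}) :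
  pr mu (rf n h) = \sum_a pr mu (rf n.+1 (ffcons a h)).
Proof.
rewrite /pr -mpT.2; last exact: measurable_refine_n.
apply: pr_partition => [a|a a' aa'|w]; first exact: measurable_refine_n.
  by rewrite !refine_n_ffcons setIACA (dP _ _ aa') set0I.
split; last by move=> [a]; rewrite refine_n_ffcons => -[].
by have [a Pa] := is_partition_cover Ppart w; exists a; rewrite refine_n_ffcons.
Qed.

Lemma entropy_refine_n_le n : entropy mu (rf n) <= entropy mu (rf n.+1).
Proof.
rewrite !entropyE lerN2 (big_ffrcons _ _ (fun h => xlnx (pr mu (rf n.+1 h)))).
apply: ler_sum => h _; rewrite pr_refine_n_ffrcons.
by apply: xlnx_sum_le => b; exact: pr_ge0.
Qed.

Lemma entropy_refine_n1 : entropy mu (rf 1) = entropy mu P.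
Proof.
rewrite !entropyE (big_ffun1 _ (fun h => xlnx (pr mu (rf 1 h)))); congr (- _).
apply: eq_bigr => a _; congr (xlnx (pr mu _)); apply/seteqP; split => w /=.
  by move=> /(_ ord0); rewrite ffunE.
by move=> Paw k; rewrite ffunE (ord1 k).
Qed.

(* Index P_(n+2) by (a, m, b): its two marginals are P_(n+1) and T^-1 P_(n+1),
   and its total is T^-1 P_n; then apply submodularity for each m. *)
Lemma entropy_refine_n_concave n :
  entropy mu (rf n.+2) + entropy mu (rf n) <= entropy mu (rf n.+1) + entropy mu (rf n.+1).
Proof.
pose p a (m : {ffun 'I_n -> I}) b := pr mu (rf n.+2 (ffcons a (ffrcons m b))).
have pE a m b : p a m b = pr mu (rf n.+2 (ffrcons (ffcons a m) b)).
  by rewrite /p refine_n_ffcons_rcons refine_n_ffrcons.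
have H2 : \sum_h xlnx (pr mu (rf n.+2 h)) = \sum_m \sum_a \sum_b xlnx (p a m b).
  rewrite (big_ffcons _ _ (fun h => xlnx (pr mu (rf n.+2 h)))) [RHS]exchange_big.
  by apply: eq_bigr => a _; rewrite big_ffrcons.
have H1l : \sum_h xlnx (pr mu (rf n.+1 h)) = \sum_m \sum_a xlnx (\sum_b p a m b).
  rewrite (big_ffcons _ _ (fun h => xlnx (pr mu (rf n.+1 h)))) exchange_big.
  apply: eq_bigr => m _; apply: eq_bigr => a _.
  by rewrite pr_refine_n_ffrcons; under eq_bigr do rewrite -pE.
have H1r : \sum_h xlnx (pr mu (rf n.+1 h)) = \sum_m \sum_b xlnx (\sum_a p a m b).
  rewrite (big_ffrcons _ _ (fun h => xlnx (pr mu (rf n.+1 h)))).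
  by apply: eq_bigr => m _; apply: eq_bigr => b _; rewrite pr_refine_n_ffcons.
have H0 : \sum_m xlnx (pr mu (rf n m)) = \sum_m xlnx (\sum_a \sum_b p a m b).
  apply: eq_bigr => m _; rewrite pr_refine_n_ffcons; congr xlnx.
  by apply: eq_bigr => a _; rewrite pr_refine_n_ffrcons; under eq_bigr do rewrite -pE.
have : \sum_m (\sum_a xlnx (\sum_b p a m b) + \sum_b xlnx (\sum_a p a m b)) <=
         \sum_m (\sum_a \sum_b xlnx (p a m b) + xlnx (\sum_a \sum_b p a m b)).
  by apply: ler_sum => m _; apply: xlnx_submodular => a b; exact: pr_ge0.
rewrite !big_split /= -H2 -H0 -H1l -H1r !entropyE; lra.
Qed.

Lemma ks_entropy_part_le : ks_entropy_part mu T P <= entropy mu (rf 2) - entropy mu P.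
Proof.
set u := fun n => entropy mu (rf n.+1) - entropy mu (rf n).
have u_dec : nonincreasing_seq u.
  by apply/nonincreasing_seqP => n; rewrite /u; have := entropy_refine_n_concave n; lra.
have u_lb : has_lbound (range u).
  by exists 0 => _ [k _ <-]; rewrite /u subr_ge0 entropy_refine_n_le.
rewrite -entropy_refine_n1.
exact: nonincreasing_cvgn_ge u_dec (nonincreasing_is_cvgn u_dec u_lb) 1.
Qed.

End IteratedRefinement.

Lemma sum_ord_ltn m l : (\sum_(i < m) (i < l : nat))%N = minn m l.
Proof.
elim: m => [|m IHm]; first by rewrite big_ord0 min0n.
rewrite big_ord_recr /= IHm; case: (ltnP m l) => ml.
  by rewrite addn1 (minn_idPl ml).
by rewrite addn0 (minn_idPr (leqW ml)).
Qed.

Section Precedence.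
Context {R : realType} {n : nat}.
Implicit Types (x : 'I_n -> R) (a b c : 'I_n).

Definition prec x a b : bool := (x b < x a) || ((x a == x b) && (b < a)%N).

Lemma precxx x a : prec x a a = false.
Proof. by rewrite /prec ltxx ltnn andbF. Qed.

Lemma prec_trans {x a b c} : prec x a b -> prec x b c -> prec x a c.
Proof.
rewrite /prec => /orP[ba|/andP[/eqP eab ba]] /orP[cb|/andP[/eqP ebc cb]].
- by rewrite (lt_trans cb ba).
- by rewrite -ebc ba.
- by rewrite eab cb.
- by rewrite eab ebc eqxx (ltn_trans cb ba) orbT.
Qed.

Lemma prec_total x a b : a != b -> prec x a b || prec x b a.
Proof.
move=> ab; rewrite /prec; case: ltgtP => //= _.
by case: ltngtP => // /val_inj eab; rewrite eab eqxx in ab.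
Qed.

Lemma prec_asym x a b : prec x a b -> prec x b a = false.
Proof. by move=> ab; apply/negP => /(prec_trans ab); rewrite precxx. Qed.

Definition prec_rank x a : nat := (\sum_c prec x c a)%N.

Lemma prec_rank_lt x a b : prec x a b -> (prec_rank x a < prec_rank x b)%N.
Proof.
move=> ab; rewrite /prec_rank (bigD1 a)//= [X in (_ < X)%N](bigD1 a)//=.
rewrite precxx ab add0n add1n ltnS; apply: leq_sum => c _.
by case: (boolP (prec x c a)) => // /prec_trans/(_ ab) ->.
Qed.

Lemma prec_rank_inj x : injective (prec_rank x).
Proof.
move=> a b eab; apply/eqP; apply: contraT => /(prec_total x).
by case/orP => /prec_rank_lt; rewrite eab ltnn.
Qed.

Lemma prec_rank_bound x a : (prec_rank x a < n)%N.
Proof.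
rewrite /prec_rank (bigD1 a)//= precxx add0n.
apply: (@leq_ltn_trans (\sum_(c | c != a) 1)%N); first by apply: leq_sum => c _; case: prec.
by rewrite sum1_card cardC1 card_ord; case: n a => [[]|].
Qed.

End Precedence.

Section OrdinalPattern.
Context {R : realType} {d : nat}.
Implicit Types (x y : 'I_d.+1 -> R) (pi : {perm 'I_d.+1}).

Lemma has_ordinal_patternE x pi : has_ordinal_pattern x pi <->
  forall l1 l2 : 'I_d.+1, nat_of_ord l2 = l1.+1 -> prec x (pi l1) (pi l2).
Proof.
rewrite /has_ordinal_pattern /prec; split => H l1 l2 /H.
  by move=> [le21 eq_lt]; case: ltgtP le21 => //= e _; exact: eq_lt (esym e).
case/orP => [lt21|/andP[/eqP-> ->]] //; split => [|e]; first exact: ltW.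
by rewrite e ltxx in lt21.
Qed.

Definition prec_rank_ord x a : 'I_d.+1 := Ordinal (prec_rank_bound x a).

Lemma prec_rank_ord_inj x : injective (prec_rank_ord x).
Proof. by move=> a b /(congr1 val)/prec_rank_inj. Qed.

Definition ordinal_pattern x : {perm 'I_d.+1} := ((perm (prec_rank_ord_inj x))^-1)%g.

Lemma prec_rank_ordinal_pattern x l : prec_rank x (ordinal_pattern x l) = l.
Proof. by have := congr1 val (permKV (perm (prec_rank_ord_inj x)) l); rewrite permE. Qed.

Lemma ordinal_patternP x : has_ordinal_pattern x (ordinal_pattern x).
Proof.
apply/has_ordinal_patternE => l1 l2 e.
have : ordinal_pattern x l1 != ordinal_pattern x l2.
  apply: contra_eqN e => /eqP/(congr1 (prec_rank x)).
  by rewrite !prec_rank_ordinal_pattern => ->; lia.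
move/(prec_total x)/orP => [//|/prec_rank_lt].
by rewrite !prec_rank_ordinal_pattern e; lia.
Qed.

Lemma prec_pattern {x pi} : has_ordinal_pattern x pi ->
  forall l1 l2, prec x (pi l1) (pi l2) = (l1 < l2)%N.
Proof.
move/has_ordinal_patternE => H.
have lt_prec m (l1 l2 : 'I_d.+1) : nat_of_ord l2 = (l1 + m.+1)%N -> prec x (pi l1) (pi l2).
  elim: m l2 => [|m IHm] l2 e; first by apply: H; rewrite e addn1.
  have lt_mid : (l1 + m.+1 < d.+1)%N by have := ltn_ord l2; lia.
  apply: (prec_trans (IHm (Ordinal lt_mid) erefl)).
  by apply: H; rewrite e /= !addnS.
move=> l1 l2; case: (ltngtP l1 l2) => e.
- by apply: (lt_prec (l2 - l1).-1); lia.
- by apply: prec_asym; apply: (lt_prec (l1 - l2).-1); lia.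
- by rewrite (val_inj e) precxx.
Qed.

Lemma has_ordinal_pattern_unique x pi pi' :
  has_ordinal_pattern x pi -> has_ordinal_pattern x pi' -> pi = pi'.
Proof.
suff rankE pi'' : has_ordinal_pattern x pi'' -> forall l, prec_rank x (pi'' l) = l.
  by move=> /rankE H /rankE H'; apply/permP => l; apply: (prec_rank_inj x); rewrite H H'.
move=> H l; rewrite /prec_rank (reindex_inj (@perm_inj _ pi'')) /=.
under eq_bigr do rewrite (prec_pattern H).
by rewrite sum_ord_ltn; apply/minn_idPr/ltnW.
Qed.

Lemma prec_eq_of_pattern {x y pi} :
  has_ordinal_pattern x pi -> has_ordinal_pattern y pi -> prec x =2 prec y.
Proof.
by move=> Hx Hy a b; rewrite -(permKV pi a) -(permKV pi b) (prec_pattern Hx) (prec_pattern Hy).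
Qed.

Lemma has_ordinal_pattern_prec_eq x y pi :
  prec x =2 prec y -> has_ordinal_pattern x pi -> has_ordinal_pattern y pi.
Proof.
by move=> xy /has_ordinal_patternE H; apply/has_ordinal_patternE => l1 l2 /H; rewrite xy.
Qed.

End OrdinalPattern.

Section OrdinalPartition.
Context {Om : ptopologicalType} {R : realType}.
Local Notation B := (borel_space Om).
Context (mu : probability B R) (T : B -> B).
Hypothesis mpT : measure_preserving mu T.
Context {N : nat} (X : 'I_N -> B -> R).
Hypothesis mX : forall i, measurable_fun setT (X i).

Lemma measurable_prec n (x : B -> 'I_n -> R) : (forall a, measurable_fun setT (x^~ a)) ->
  forall a b, measurable [set w | prec (x w) a b].
Proof.
move=> mx a b; have mprec : measurable_fun setT (fun w => prec (x w) a b).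
  apply: measurable_or; first exact: measurable_fun_ltr.
  by apply: measurable_and; [exact: measurable_fun_eqr|exact: measurable_cst].
by rewrite -[X in measurable X]setTI; exact: mprec.
Qed.

Lemma measurable_delay_vector i d j :
  measurable_fun setT (fun w => delay_vector T X i d w j).
Proof. exact: measurableT_comp (mX i) (measurable_iter _ _ mpT _). Qed.

Lemma measurable_ordinal_partition d pis : measurable (ordinal_partition T X d pis).
Proof.
apply: measurable_forall => i.
have -> : (fun w => has_ordinal_pattern (delay_vector T X i d w) (pis i)) =
    [set w | forall l1 l2 : 'I_d.+1, (nat_of_ord l2 == l1.+1) ==>
       prec (delay_vector T X i d w) (pis i l1) (pis i l2)].
  apply/seteqP; split => w /=.
    by move=> /has_ordinal_patternE H l1 l2; apply/implyP => /eqP; exact: H.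
  by move=> H; apply/has_ordinal_patternE => l1 l2 /eqP; apply/implyP/H.
apply: measurable_forall => l1; apply: measurable_forall => l2.
case: eqP => _ /=; last by rewrite (_ : (fun _ : B => is_true true) = setT) //; apply/seteqP.
exact: (@measurable_prec _ (delay_vector T X i d) (measurable_delay_vector i d)).
Qed.

Lemma ordinal_partition_disj d (pis pis' : {ffun 'I_N -> {perm 'I_d.+1}}) :
  pis != pis' -> ordinal_partition T X d pis `&` ordinal_partition T X d pis' = set0.
Proof.
apply: contraNeq => /set0P[w [H H']]; apply/eqP/ffunP => i.
exact: has_ordinal_pattern_unique (H i) (H' i).
Qed.

Lemma is_partition_ordinal_partition d : is_partition (ordinal_partition T X d).
Proof.
split; first exact: measurable_ordinal_partition.
split; first exact: ordinal_partition_disj.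
apply/seteqP; split => // w _.
exists [ffun i => ordinal_pattern (delay_vector T X i d w)] => // i.
by rewrite ffunE; exact: ordinal_patternP.
Qed.

(* (X(T^(d+t) w), ..., X(T^t w)) is the subvector of
   (X(T^(d+1) w), ..., X(w)) at the positions [window d t]. *)
Definition window d (t : 'I_2) (a : 'I_d.+1) : 'I_d.+2 :=
  if nat_of_ord t == 0%N then lift ord0 a else widen_ord (leqnSn _) a.

Lemma delay_vector_window d (t : 'I_2) w i a :
  delay_vector T X i d (iter t T w) a = delay_vector T X i d.+1 w (window d t a).
Proof.
rewrite /delay_vector /window; case: t => -[|[|]]//= _.
by rewrite -iterSr subSn// -ltnS.
Qed.

Lemma window_ltn d (t : 'I_2) (a b : 'I_d.+1) : (window d t b < window d t a)%N = (b < a)%N.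
Proof. by rewrite /window; case: ifP => _ //=; rewrite !lift0 ltnS. Qed.

Lemma prec_window d (t : 'I_2) w i a b :
  prec (delay_vector T X i d (iter t T w)) a b =
  prec (delay_vector T X i d.+1 w) (window d t a) (window d t b).
Proof. by rewrite /prec !delay_vector_window window_ltn. Qed.

Lemma ordinal_partition_succ_refines d (pis : {ffun 'I_N -> {perm 'I_d.+2}}) :
  exists j : {ffun 'I_2 -> {ffun 'I_N -> {perm 'I_d.+1}}},
    ordinal_partition T X d.+1 pis `<=` refine_n T (ordinal_partition T X d) 2 j.
Proof.
have [[w0 Hw0]|empty] := pselect (exists w, ordinal_partition T X d.+1 pis w); last first.
  by exists [ffun => [ffun => 1%g]] => w Hw; exfalso; apply: empty; exists w.
exists [ffun t : 'I_2 => [ffun i => ordinal_pattern (delay_vector T X i d (iter t T w0))]].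
move=> w Hw t i; rewrite !ffunE.
apply: has_ordinal_pattern_prec_eq (ordinal_patternP _) => a b.
by rewrite !prec_window (prec_eq_of_pattern (Hw0 i) (Hw i)).
Qed.

Lemma ks_entropy_part_ordinal_le_cond d :
  ks_entropy_part mu T (ordinal_partition T X d) <= cond_entropy mu T X d.
Proof.
exact: ks_entropy_part_le (@ordinal_partition_disj d) mpT (is_partition_ordinal_partition d).
Qed.

Lemma cond_le_sorting_entropy d : cond_entropy mu T X d <= sorting_entropy mu T X d.
Proof.
rewrite /cond_entropy /sorting_entropy lerD2r.
apply: entropy_le_of_refinement (is_partition_ordinal_partition d.+1) _.
- by move=> h h'; apply: refine_n_disj; exact: ordinal_partition_disj.
- exact: ordinal_partition_succ_refines.
Qed.

End OrdinalPartition.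

Section LimnEsupEinf.
Context {R : realType}.
Local Open Scope ereal_scope.
Implicit Types u v : (\bar R)^nat.

Lemma le_limn_esup {u v} : (\forall n \near \oo, u n <= v n) -> limn_esup u <= limn_esup v.
Proof.
move=> [N _ uv]; rewrite !limn_esup_lim.
apply: lee_lim; [exact: is_cvg_esups|exact: is_cvg_esups|].
near=> n; apply: ge_ereal_sup => _ [k /= nk <-].
apply: le_trans (uv k _) _; first by rewrite /= (leq_trans _ nk)//; near: n; exists N.
by apply: ereal_sup_ubound; exists k.
Unshelve. all: by end_near. Qed.

Lemma le_limn_einf {u v} : (\forall n \near \oo, u n <= v n) -> limn_einf u <= limn_einf v.
Proof.
move=> uv; rewrite /limn_einf leeN2; apply: le_limn_esup.
by apply: filterS uv => n /=; rewrite leeN2.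
Qed.

Lemma cvg_le_limn_einf_esup {l : \bar R} {u v : R^nat} :
  (fun n => (u n)%:E) @ \oo --> l -> (forall n, (u n <= v n)%R) ->
  l <= limn_einf (fun n => (v n)%:E) /\ l <= limn_esup (fun n => (v n)%:E).
Proof.
move=> ul uv; have [<- _] := cvg_limn_einf_sup ul.
have le_inf : limn_einf (fun n => (u n)%:E) <= limn_einf (fun n => (v n)%:E).
  by apply: le_limn_einf; apply: nearW => n; rewrite lee_fin.
by split; last exact: le_trans le_inf (limn_einf_sup _).
Qed.

End LimnEsupEinf.

Section IncrementsAndMeans.
Context {R : realType}.
Implicit Types E : R^nat.

Lemma increment_le_mean E d : (0 < d)%N ->
  E d.+1 / d.+1%:R <= E d / d%:R -> E d.+1 - E d <= E d / d%:R.
Proof.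
move=> d_gt0; have d_pos : 0 < d%:R :> R by rewrite ltr0n.
rewrite ler_pdivrMr ?ltr0n// -addn1 natrD mulrDr mulr1 => H.
by rewrite lerBlDr addrC; apply: le_trans H _; rewrite divfK ?gt_eqF.
Qed.

Lemma cvg_mean_of_cvg_increment E (l : R) :
  (fun d => E d.+1 - E d) @ \oo --> l -> (fun d => E d / d%:R) @ \oo --> l.
Proof.
move=> incr_l.
have mean_l : (fun n => E 0%N * harmonic n + arithmetic_mean (fun d => E d.+1 - E d) n)
    @ \oo --> 0 + l.
  apply: cvgD; last exact: cesaro.
  by rewrite -(mulr0 (E 0%N)); apply: cvgMl_tmp; exact: cvg_harmonic.
rewrite add0r in mean_l; rewrite -cvg_shiftS.
suff -> : [sequence E n.+1 / n.+1%:R]_n =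
    (fun n => E 0%N * harmonic n + arithmetic_mean (fun d => E d.+1 - E d) n) by [].
apply/funext => n; rewrite /= /harmonic /arithmetic_mean seriesEnat /=.
by rewrite telescope_sumr// [_^-1 * _]mulrC -mulrDl addrC subrK.
Qed.

Lemma limn_increment_le_mean E :
  (exists d0 : nat, (1 <= d0)%N /\ forall d, (d0 <= d)%N -> E d.+1 / d.+1%:R <= E d / d%:R)
  \/ (exists l : R, (fun d => E d.+1 - E d) @ \oo --> l) ->
  (limn_esup (fun d => (E d.+1 - E d)%:E) <= limn_esup (fun d => (E d / d%:R)%:E) /\
   limn_einf (fun d => (E d.+1 - E d)%:E) <= limn_einf (fun d => (E d / d%:R)%:E))%E.
Proof.
case=> [[d0 [d0_gt0 decr]]|[l incr_l]].
  have ev : \forall d \near \oo, ((E d.+1 - E d)%:E <= (E d / d%:R)%:E)%E.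
    exists d0 => // d /= d0d; rewrite lee_fin increment_le_mean ?decr//.
    exact: leq_trans d0d.
  by split; [apply: le_limn_esup|apply: le_limn_einf].
have EFin_cvg (u : R^nat) : u @ \oo --> l -> (fun d => (u d)%:E) @ \oo --> l%:E.
  by move=> ul; apply: cvg_EFin => //; exact: nearW.
have [-> ->] := cvg_limn_einf_sup (EFin_cvg _ incr_l).
by have [-> ->] := cvg_limn_einf_sup (EFin_cvg _ (cvg_mean_of_cvg_increment _ _ incr_l)).
Qed.

End IncrementsAndMeans.

Theorem theorem1 (Om : ptopologicalType) (R : realType)
  (mu : probability (borel_space Om) R)
  (T : borel_space Om -> borel_space Om)
  (N : nat) (X : 'I_N -> borel_space Om -> R) :
  measure_preserving mu T ->
  (0 < N)%N ->
  (forall i : 'I_N, measurable_fun setT (X i)) ->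
  (fun d => (ks_entropy_part mu T (ordinal_partition T X d))%:E) @ \oo
    --> ks_entropy mu T ->
  ( (ks_entropy mu T <= limn_esup (fun d => (cond_entropy mu T X d)%:E)
     /\ limn_esup (fun d => (cond_entropy mu T X d)%:E)
          <= limn_esup (fun d => (sorting_entropy mu T X d)%:E))%E
  /\ (ks_entropy mu T <= limn_einf (fun d => (cond_entropy mu T X d)%:E)
     /\ limn_einf (fun d => (cond_entropy mu T X d)%:E)
          <= limn_einf (fun d => (sorting_entropy mu T X d)%:E))%E )
  /\
  ( ( (exists d0 : nat, (1 <= d0)%N /\
         forall d : nat, (d0 <= d)%N ->
           perm_entropy mu T X d.+1 <= perm_entropy mu T X d)
      \/ (exists l : R, (fun d => sorting_entropy mu T X d) @ \oo --> l) ) ->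
    ( (ks_entropy mu T <= limn_esup (fun d => (cond_entropy mu T X d)%:E)
       /\ limn_esup (fun d => (cond_entropy mu T X d)%:E)
            <= limn_esup (fun d => (sorting_entropy mu T X d)%:E)
       /\ limn_esup (fun d => (sorting_entropy mu T X d)%:E)
            <= limn_esup (fun d => (perm_entropy mu T X d)%:E))%E
    /\ (ks_entropy mu T <= limn_einf (fun d => (cond_entropy mu T X d)%:E)
       /\ limn_einf (fun d => (cond_entropy mu T X d)%:E)
            <= limn_einf (fun d => (sorting_entropy mu T X d)%:E)
       /\ limn_einf (fun d => (sorting_entropy mu T X d)%:E)
            <= limn_einf (fun d => (perm_entropy mu T X d)%:E))%E ) ).
Proof.
move=> mpT _ mX OR.
have hc d : ks_entropy_part mu T (ordinal_partition T X d) <= cond_entropy mu T X d.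
  exact: ks_entropy_part_ordinal_le_cond.
have cs d : cond_entropy mu T X d <= sorting_entropy mu T X d.
  exact: cond_le_sorting_entropy.
have [ks_inf ks_sup] := cvg_le_limn_einf_esup OR hc.
have cs_near : \forall d \near \oo, ((cond_entropy mu T X d)%:E <= (sorting_entropy mu T X d)%:E)%E.
  by apply: nearW => d; rewrite lee_fin.
have cs_sup := le_limn_esup cs_near; have cs_inf := le_limn_einf cs_near.
split; first by [].
move=> /(limn_increment_le_mean (fun d => entropy mu (ordinal_partition T X d))).
by move=> [sp_sup sp_inf].
Qed.
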